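(* Let $S$ be an inverse monoid which is either (a) $E^*$-unitary and $0$-bisimple, or (b) $E$-unitary and bisimple, and let $C$ be the right unit submonoid of $S$. Then $S$ is $F^*$-inverse in case (a) (respectively $F$-inverse in case (b)) if and only if the partially ordered set $P_r(C)$ of principal right ideals of $C$ is a join semilattice.
   Context: For an inverse monoid $S$, $E(S)$ denotes its set of idempotents and, if $S$ has a zero, $E^*(S)$ its nonzero idempotents. A subset $U$ is unitary if for $u\in U$, $s\in S$: $su\in U\Rightarrow s\in U$ and $us\in U\Rightarrow s\in U$. $S$ is $E$-unitary if $E(S)$ is unitary, and $E^*$-unitary if $E^*(S)$ is unitary. $S$ is bisimple if all its elements are $\mathscr{D}$-related, and $0$-bisimple (for $S$ with zero) if all its nonzero elements are $\mathscr{D}$-related. The right unit submonoid of $S$ is $\{s\in S: st=1 \text{ for some } t\in S\}$. The natural partial order is $a\le b$ iff $a=eb$ for some idempotent $e$; $S$ is $F^*$-inverse if every nonzero element lies beneath a unique maximal element, and $F$-inverse (for $S$ without zero) if every element lies beneath a unique maximal element. $P_r(C)$ is the set $\{aC : a\in C\}$ ordered by inclusion; a join semilattice is a poset in which any two elements have a least upper bound. *)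

Set Implicit Arguments.

Section InverseMonoids.
Variable S : Type.
Variable mul : S -> S -> S.
Variable one : S.

Definition is_inverse_monoid : Prop :=
  (forall a b c, mul (mul a b) c = mul a (mul b c)) /\
  (forall a, mul one a = a) /\ (forall a, mul a one = a) /\
  (forall a, exists! b, mul (mul a b) a = a /\ mul (mul b a) b = b).

Definition idempotent (e : S) : Prop := mul e e = e.

Definition is_zero (z : S) : Prop := forall x, mul z x = z /\ mul x z = z.

Definition nonzero_idempotent (z e : S) : Prop := idempotent e /\ e <> z.

Definition unitary (U : S -> Prop) : Prop :=
  forall u s, U u -> (U (mul s u) -> U s) /\ (U (mul u s) -> U s).

Definition E_unitary : Prop := unitary idempotent.
Definition Estar_unitary (z : S) : Prop := unitary (nonzero_idempotent z).

Definition greenR (a b : S) : Prop :=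
  (exists x, a = mul b x) /\ (exists y, b = mul a y).
Definition greenL (a b : S) : Prop :=
  (exists x, a = mul x b) /\ (exists y, b = mul y a).
Definition greenD (a b : S) : Prop := exists c, greenR a c /\ greenL c b.

Definition bisimple : Prop := forall a b, greenD a b.
Definition zero_bisimple (z : S) : Prop :=
  forall a b, a <> z -> b <> z -> greenD a b.

Definition nat_le (a b : S) : Prop := exists e, idempotent e /\ a = mul e b.
Definition maximal (m : S) : Prop := forall x, nat_le m x -> x = m.

Definition F_inverse : Prop :=
  forall a, exists! m, maximal m /\ nat_le a m.
Definition Fstar_inverse (z : S) : Prop :=
  forall a, a <> z -> exists! m, maximal m /\ nat_le a m.

Definition right_unit (s : S) : Prop := exists t, mul s t = one.

Definition pr_ideal (a : S) : S -> Prop :=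
  fun x => exists c, right_unit c /\ x = mul a c.

Definition pr_incl (a b : S) : Prop := forall x, pr_ideal a x -> pr_ideal b x.

Definition Pr_join_semilattice : Prop :=
  forall a b, right_unit a -> right_unit b ->
    exists c, right_unit c /\ pr_incl a c /\ pr_incl b c /\
      (forall d, right_unit d -> pr_incl a d -> pr_incl b d -> pr_incl c d).

End InverseMonoids.

(* Bisimplicity writes every (nonzero) element as u⁻¹v with u, v in the right
   unit submonoid C: if ss⁻¹ = a⁻¹a with a in C, then s = a⁻¹(as) and as is in C.
   Between such quotients, u⁻¹v ≤ x⁻¹y holds exactly when u = cx and v = cy for
   some c in C, i.e. when cC contains uC and vC with cofactors x and y.
   (E- or E*-)unitarity makes C left cancellative, and then the maximal elements
   above u⁻¹v are exactly the x⁻¹y coming from least upper bounds cC of uC and vC;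
   so maximal elements exist and are unique iff such joins always exist. *)

From Stdlib Require Import ssreflect ClassicalEpsilon Classical.

Set Implicit Arguments.

Section InverseMonoid.
Variables (S : Type) (mul : S -> S -> S) (one : S).
Hypothesis HM : is_inverse_monoid mul one.

Local Infix "*" := mul.
Local Notation idem := (idempotent mul).
Local Notation C := (right_unit mul one).
Local Notation "a ≤ b" := (nat_le mul a b) (at level 70).

Lemma mulA a b c : a * b * c = a * (b * c).
Proof. by case: HM. Qed.

Lemma mul1s a : one * a = a.
Proof. by case: HM => _ []. Qed.

Lemma muls1 a : a * one = a.
Proof. by case: HM => _ [_ []]. Qed.

Lemma exists_inverse a : exists b, a * (b * a) = a /\ b * (a * b) = b.
Proof.
case: HM => _ [_ [_ /(_ a) [b [[aba bab] _]]]].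
by exists b; rewrite -!mulA.
Qed.

(* By [inv_uniq] below, this is the unique inverse of [a]. *)
Definition inv a : S := proj1_sig (constructive_indefinite_description _ (exists_inverse a)).

Lemma mulVmul a : a * (inv a * a) = a.
Proof. by rewrite /inv; case: constructive_indefinite_description => ? []. Qed.

Lemma VmulV a : inv a * (a * inv a) = inv a.
Proof. by rewrite /inv; case: constructive_indefinite_description => ? []. Qed.

Lemma inv_uniq a b : a * (b * a) = a -> b * (a * b) = b -> b = inv a.
Proof.
case: HM => _ [_ [_ /(_ a) [c [_ uniq_c]]]] aba bab.
rewrite -(uniq_c b) ?(uniq_c (inv a)) // !mulA ?mulVmul ?VmulV //.
Qed.

Lemma mulVmulK a w : a * (inv a * (a * w)) = a * w.
Proof. by rewrite -(mulA (inv a)) -mulA mulVmul. Qed.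

Lemma VmulVK a w : inv a * (a * (inv a * w)) = inv a * w.
Proof. by rewrite -(mulA a) -mulA VmulV. Qed.

Lemma invK a : inv (inv a) = a.
Proof. by symmetry; apply: inv_uniq; rewrite ?mulVmul ?VmulV. Qed.

Lemma inv_idem e : idem e -> inv e = e.
Proof. by move=> ee; symmetry; apply: inv_uniq; rewrite !ee. Qed.

Lemma idem_mulK e w : idem e -> e * (e * w) = e * w.
Proof. by move=> ee; rewrite -mulA ee. Qed.

Lemma idem_mul e f : idem e -> idem f -> idem (e * f).
Proof.
move=> ee ff; set x := inv (e * f).
have xK w : x * (e * (f * (x * w))) = x * w by move: (VmulVK (e * f) w); rewrite mulA.
have fxe : f * (x * e) = x.
  apply: inv_uniq; rewrite !mulA !idem_mulK //.
    by move: (mulVmul (e * f)); rewrite !mulA.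
  by rewrite xK.
have xx : idem x by rewrite /idempotent -{1 2}fxe !mulA xK.
by rewrite /idempotent -(invK (e * f)) inv_idem.
Qed.

Lemma idem_comm e f : idem e -> idem f -> e * f = f * e.
Proof.
move=> ee ff; rewrite -(inv_idem (idem_mul ee ff)); symmetry; apply: inv_uniq.
  by rewrite !mulA !idem_mulK // -mulA idem_mul.
by rewrite !mulA !idem_mulK // -mulA idem_mul.
Qed.

Lemma idem_commK e f w : idem e -> idem f -> e * (f * w) = f * (e * w).
Proof. by move=> ee ff; rewrite -!mulA (idem_comm ee ff). Qed.

Lemma idem_mulV a : idem (a * inv a).
Proof. by rewrite /idempotent !mulA mulVmulK. Qed.

Lemma idem_Vmul a : idem (inv a * a).
Proof. by rewrite /idempotent !mulA VmulVK. Qed.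

Lemma invM a b : inv (a * b) = inv b * inv a.
Proof.
symmetry; apply: inv_uniq; rewrite !mulA.
  rewrite -[b * (inv b * _)]mulA -[inv a * (a * b)]mulA.
  by rewrite (idem_commK _ (idem_mulV b) (idem_Vmul a)) !mulA mulVmul mulVmulK.
rewrite -[inv a * (a * _)]mulA -[b * (inv b * _)]mulA.
by rewrite (idem_commK _ (idem_Vmul a) (idem_mulV b)) !mulA VmulV VmulVK.
Qed.

Lemma inv1 : inv one = one.
Proof. by apply: inv_idem; rewrite /idempotent mul1s. Qed.

Lemma right_unitE u : C u <-> u * inv u = one.
Proof.
split=> [[t ut] | uu]; last by exists (inv u).
by rewrite -[u * inv u]muls1 -{1}ut !mulA mulVmulK.
Qed.

Lemma right_unitK u w : C u -> u * (inv u * w) = w.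
Proof. by move/right_unitE=> uu; rewrite -mulA uu mul1s. Qed.

Lemma right_unit1 : C one.
Proof. by exists one; rewrite mul1s. Qed.

Lemma right_unitM u v : C u -> C v -> C (u * v).
Proof.
by move=> cu [t vt]; exists (t * inv u); rewrite mulA -(mulA v) vt mul1s; apply/right_unitE.
Qed.

Lemma right_unit_rcancel g x y : C g -> x * g = y * g -> x = y.
Proof. by move/right_unitE=> gg xy; rewrite -[x]muls1 -[y]muls1 -gg -!mulA xy. Qed.

Lemma right_unit_Vmul1 e g : C g -> e * g = one -> inv e * e = one.
Proof.
move=> cg eg; have ge : g * e = one.
  by apply: (right_unit_rcancel cg); rewrite mulA eg muls1 mul1s.
by rewrite -(@inv_uniq e g) // ?ge ?eg muls1.
Qed.

Lemma nat_leE_l a b : a ≤ b -> a = a * (inv a * b).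
Proof.
case=> f [ff ->]; rewrite invM (inv_idem ff) !mulA.
by rewrite -[b * (inv b * _)]mulA (idem_commK _ (idem_mulV b) ff) !mulA idem_mulK // mulVmul.
Qed.

Lemma nat_leE_r a b : a ≤ b -> a = b * (inv a * a).
Proof.
case=> f [ff ->]; rewrite invM (inv_idem ff) !mulA idem_mulK //.
by rewrite -[b * (inv b * _)]mulA (idem_commK _ (idem_mulV b) ff) !mulA mulVmul.
Qed.

Lemma nat_le_trans a b c : a ≤ b -> b ≤ c -> a ≤ c.
Proof.
by case=> f [ff ->] [g [gg ->]]; exists (f * g); rewrite mulA; split=> //; apply: idem_mul.
Qed.

Lemma pr_inclP a b : pr_incl mul one a b <-> exists c, C c /\ a = b * c.
Proof.
split=> [sub | [c [cc ->]] _ [k [ck ->]]].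
  have [|c [cc ac]] := sub a; last by exists c.
  by exists one; rewrite muls1; split=> //; apply: right_unit1.
by exists (c * k); rewrite mulA; split=> //; apply: right_unitM.
Qed.

Lemma le_quotient_factor u v x y : C u -> C v -> C x -> C y ->
  inv u * v ≤ inv x * y -> exists c, C c /\ u = c * x /\ v = c * y.
Proof.
move=> cu cv cx cy le_uv_xy.
have v_eq : v = u * (inv x * y).
  have := nat_leE_l le_uv_xy; rewrite invM invK !mulA right_unitK // => E.
  by rewrite -(right_unitK v cu) E mulVmulK.
have u_eq : u = v * (inv y * x).
  have := nat_leE_r le_uv_xy; rewrite invM invK !mulA right_unitK // => E.
  have Vu : inv u = inv x * (y * inv v).
    by rewrite -[inv u]muls1 -(proj1 (right_unitE v) cv) -mulA E !mulA VmulV.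
  by rewrite -(invK u) Vu !invM !invK mulA.
have uxx : u * (inv x * x) = u by rewrite {2}u_eq v_eq !mulA right_unitK.
exists (u * inv x); rewrite !mulA uxx -v_eq; split=> //.
apply/right_unitE; rewrite !invM invK !mulA -[inv x * (x * _)]mulA -(mulA u) uxx.
exact/right_unitE.
Qed.

Lemma quotient_le_cancel c x y : C x -> inv (c * x) * (c * y) ≤ inv x * y.
Proof.
move=> cx; exists (inv (c * x) * (c * x)); split; first exact: idem_Vmul.
by rewrite !mulA right_unitK.
Qed.


Lemma idem_D_one e : idem e -> greenD mul e one -> exists w, C w /\ e = inv w * w.
Proof.
move=> ee [c [[[x e_eq] [y c_eq]] [_ [y' one_eq]]]].
exists (inv c); split.
  by exists (inv y'); rewrite -invM -one_eq inv1.
have ec : e * c = c by rewrite c_eq idem_mulK.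
have e_eq' : e = c * (inv c * e) by rewrite e_eq mulVmulK.
by rewrite invK {1}e_eq' -mulA -(idem_comm ee (idem_mulV c)) -mulA ec.
Qed.

Lemma quotient_of_D_one s : greenD mul (s * inv s) one ->
  exists u v, C u /\ C v /\ s = inv u * v.
Proof.
case/(idem_D_one (idem_mulV s)) => [a [ca s_eq]].
exists a, (a * s); split=> //; split.
  by apply/right_unitE; rewrite invM mulA -(mulA s) s_eq mulA VmulV; apply/right_unitE.
by rewrite -mulA -s_eq mulA mulVmul.
Qed.

Lemma right_unit_lcancel_of (P : S -> Prop) :
  (forall e f, idem e -> P e -> e * f = e -> idem f) ->
  (forall w, C w -> P (inv w * w)) ->
  forall d x y, C d -> C x -> C y -> d * x = d * y -> x = y.
Proof.
move=> unitary_P P_Vmul d x y cd cx cy dx_dy.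
(* [inv b * a] is absorbed on the left by the idempotent [inv (d * b) * (d * b)]. *)
have idem_quotient a b : C a -> C b -> d * a = d * b -> idem (inv b * a).
  move=> ca cb dab; apply: (unitary_P _ _ (idem_Vmul (d * b)) (P_Vmul _ (right_unitM cd cb))).
  by rewrite !mulA right_unitK // dab.
set f := inv y * x; set g := inv x * y.
have ff : idem f by apply: idem_quotient.
have gg : idem g by apply: idem_quotient.
have x_eq : x = y * f by rewrite /f right_unitK.
have y_eq : y = x * g by rewrite /g right_unitK.
have xf : x * f = x by rewrite {1}x_eq mulA ff -x_eq.
by rewrite y_eq -{2}xf mulA (idem_comm ff gg) -mulA -y_eq -x_eq.
Qed.

Definition is_pr_join a b c : Prop :=
  C c /\ pr_incl mul one a c /\ pr_incl mul one b c /\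
  forall d, C d -> pr_incl mul one a d -> pr_incl mul one b d -> pr_incl mul one c d.

Section MaximalElementsAndJoins.

(* [N] is the part of [S] where maximal elements are sought: all of [S], or its
   nonzero elements. *)
Variable N : S -> Prop.
Hypothesis N_quotient : forall s, N s -> exists u v, C u /\ C v /\ s = inv u * v.
Hypothesis quotient_N : forall u v, C u -> C v -> N (inv u * v).
Hypothesis N_le : forall s t, N s -> s ≤ t -> N t.
Hypothesis right_unit_lcancel : forall d x y, C d -> C x -> C y -> d * x = d * y -> x = y.

Lemma pr_incl_mul_unit c e : C c -> C e -> pr_incl mul one c (c * e) -> inv e * e = one.
Proof.
move=> cc ce /pr_inclP [g [cg c_eq]]; apply: (right_unit_Vmul1 cg).
apply: (right_unit_lcancel cc); rewrite ?muls1 -?mulA -?c_eq //.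
  exact: right_unitM.
exact: right_unit1.
Qed.

Lemma pr_join_maximal c x y : C x -> C y ->
  is_pr_join (c * x) (c * y) c -> maximal mul (inv x * y).
Proof.
move=> cx cy [cc [_ [_ lub]]] t le_xy_t.
have [x' [y' [cx' [cy' t_eq]]]] := N_quotient (N_le (quotient_N cx cy) le_xy_t).
rewrite t_eq in le_xy_t *.
have [e [ce [x_eq y_eq]]] := le_quotient_factor cx cy cx' cy' le_xy_t.
have ee : inv e * e = one.
  apply: (pr_incl_mul_unit cc ce); apply: lub; first exact: right_unitM.
    by apply/pr_inclP; exists x'; rewrite x_eq mulA.
  by apply/pr_inclP; exists y'; rewrite y_eq mulA.
by rewrite x_eq y_eq invM !mulA -(mulA (inv e)) ee mul1s.
Qed.

Lemma pr_join_maximal_uniq c x y m : C x -> C y ->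
  is_pr_join (c * x) (c * y) c -> maximal mul m -> inv (c * x) * (c * y) ≤ m ->
  m = inv x * y.
Proof.
move=> cx cy [cc [_ [_ lub]]] max_m le_m.
have [ccx ccy] := conj (right_unitM cc cx) (right_unitM cc cy).
have [x' [y' [cx' [cy' m_eq]]]] := N_quotient (N_le (quotient_N ccx ccy) le_m).
rewrite m_eq in le_m max_m *.
have [c' [cc' [cx_eq cy_eq]]] := le_quotient_factor ccx ccy cx' cy' le_m.
have /pr_inclP [h [ch c_eq]] : pr_incl mul one c c'.
  by apply: lub=> //; apply/pr_inclP; [exists x' | exists y'].
have x'_eq : x' = h * x.
  by apply: (right_unit_lcancel cc')=> //; [exact: right_unitM | rewrite -mulA -c_eq].
have y'_eq : y' = h * y.
  by apply: (right_unit_lcancel cc')=> //; [exact: right_unitM | rewrite -mulA -c_eq].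
by symmetry; apply: max_m; rewrite x'_eq y'_eq; apply: quotient_le_cancel.
Qed.

Lemma F_inverse_on_of_pr_join : Pr_join_semilattice mul one ->
  forall s, N s -> exists! m, maximal mul m /\ s ≤ m.
Proof.
move=> join s Ns; have [u [v [cu [cv ->]]]] := N_quotient Ns.
have [c join_c] := join u v cu cv.
have [_ [/pr_inclP [x [cx u_eq]] [/pr_inclP [y [cy v_eq]] _]]] := join_c.
rewrite u_eq v_eq in join_c *.
exists (inv x * y); split.
  by split; [exact: pr_join_maximal join_c | exact: quotient_le_cancel].
by move=> m [max_m le_m]; symmetry; apply: pr_join_maximal_uniq join_c max_m le_m.
Qed.

Lemma pr_join_of_F_inverse_on : (forall s, N s -> exists! m, maximal mul m /\ s ≤ m) ->
  Pr_join_semilattice mul one.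
Proof.
move=> F a b ca cb.
have [m [[max_m le_m] m_uniq]] := F _ (quotient_N ca cb).
have [x [y [cx [cy m_eq]]]] := N_quotient (N_le (quotient_N ca cb) le_m).
rewrite m_eq in le_m m_uniq.
have [c [cc [a_eq b_eq]]] := le_quotient_factor ca cb cx cy le_m.
exists c; split=> //; split; first by apply/pr_inclP; exists x.
split; first by apply/pr_inclP; exists y.
move=> d cd /pr_inclP [x' [cx' a_eq']] /pr_inclP [y' [cy' b_eq']].
have le_ab : inv a * b ≤ inv x' * y' by rewrite a_eq' b_eq'; apply: quotient_le_cancel.
have [m' [[max_m' le_m'] _]] := F _ (quotient_N cx' cy').
have m'_eq : inv x * y = m' by apply: m_uniq; split; last exact: nat_le_trans le_m'.
rewrite -m'_eq in le_m'.
have [e [ce [x'_eq _]]] := le_quotient_factor cx' cy' cx cy le_m'.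
apply/pr_inclP; exists e; split=> //.
by apply: (right_unit_rcancel cx); rewrite -a_eq mulA -x'_eq.
Qed.

Lemma F_inverse_on_iff_pr_join :
  (forall s, N s -> exists! m, maximal mul m /\ s ≤ m) <-> Pr_join_semilattice mul one.
Proof. by split; [exact: pr_join_of_F_inverse_on | exact: F_inverse_on_of_pr_join]. Qed.

End MaximalElementsAndJoins.

Section Zero.

Variable z : S.
Hypothesis zero_z : is_zero mul z.

Lemma mulV_neq_zero s : s <> z -> s * inv s <> z.
Proof. by move=> sz ssz; apply: sz; rewrite -(mulVmul s) -mulA ssz; case: (zero_z s). Qed.

Lemma le_neq_zero s t : s <> z -> s ≤ t -> t <> z.
Proof. by move=> sz [f [_ s_eq]] tz; apply: sz; rewrite s_eq tz; case: (zero_z f). Qed.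

Lemma quotient_neq_zero u v : one <> z -> C u -> C v -> inv u * v <> z.
Proof.
move=> one_z cu /right_unitE vv uvz; apply: one_z.
have vz : v = z by rewrite -(right_unitK v cu) uvz; case: (zero_z u).
by rewrite -vv vz; case: (zero_z (inv z)).
Qed.

End Zero.

Lemma Fstar_inverse_iff_pr_join z : is_zero mul z -> Estar_unitary mul z ->
  zero_bisimple mul z -> (Fstar_inverse mul z <-> Pr_join_semilattice mul one).
Proof.
move=> zero_z unitary_E0 bisim0.
case: (classic (one = z)) => [one_z | one_neq_z].
  have all_z x : x = z by rewrite -[x]muls1 one_z; case: (zero_z x).
  split=> _; last by move=> a /(_ (all_z a)).
  move=> a b _ _; exists one; split; first exact: right_unit1.
  have incl c d : pr_incl mul one c d.
    apply/pr_inclP; exists one; split; first exact: right_unit1.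
    by rewrite (all_z c) (all_z (d * one)).
  by split; [exact: incl | split; [exact: incl | move=> *; exact: incl]].
apply: (F_inverse_on_iff_pr_join (fun s => s <> z)).
- by move=> s sz; apply/quotient_of_D_one/bisim0; [exact: mulV_neq_zero | exact: one_neq_z].
- by move=> u v; apply: (quotient_neq_zero zero_z).
- by move=> s t; apply: (le_neq_zero zero_z).
- apply: (right_unit_lcancel_of (fun e => e <> z)).
    move=> e f ee ez ef; apply: (proj1 (proj2 (unitary_E0 e f (conj ee ez)) _)).
    by rewrite ef.
  by move=> w cw; apply: (quotient_neq_zero zero_z).
Qed.

Lemma F_inverse_iff_pr_join : E_unitary mul -> bisimple mul ->
  (F_inverse mul <-> Pr_join_semilattice mul one).
Proof.
move=> unitary_E bisim.
suff F_iff : (forall s, True -> exists! m, maximal mul m /\ s ≤ m) <->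
             Pr_join_semilattice mul one.
  by split=> [F | /F_iff F a]; [apply/F_iff => a _; exact: F | exact: F].
apply: (F_inverse_on_iff_pr_join (fun _ => True)) => //.
- by move=> s _; apply/quotient_of_D_one/bisim.
- apply: (right_unit_lcancel_of (fun _ => True)) => // e f ee _ ef.
  by apply: (proj2 (unitary_E e f ee)); rewrite /idempotent ef.
Qed.

End InverseMonoid.

Theorem proposition4p3 (S : Type) (mul : S -> S -> S) (one : S) :
  is_inverse_monoid mul one ->
  (forall z : S, is_zero mul z -> Estar_unitary mul z -> zero_bisimple mul z ->
     (Fstar_inverse mul z <-> Pr_join_semilattice mul one)) /\
  (E_unitary mul -> bisimple mul ->
     (F_inverse mul <-> Pr_join_semilattice mul one)).
Proof.
move=> HM; split; [exact: Fstar_inverse_iff_pr_join | exact: F_inverse_iff_pr_join].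
Qed.
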